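(* Let $\varphi$ be the move interpretation on $2$-cells of $\mathbf{Toff}$ (the unique extension, compatible with $\star_0$ as cartesian product and $\star_1$ as composition of maps, of $\varphi(s)(v,w)=(w{\tt l},v{\tt r})$, $\varphi(N)(v)=v{\tt t}$, $\varphi(T_2)(v,w)=(v{\tt t},w{\tt t})$, $\varphi(T_3)(v,w,z)=(v{\tt t},w{\tt t},z{\tt t})$, identities mapped to identities). Then for every $3$-generator $\rho\in R_3$ with source $2$-cell $A$ and target $2$-cell $B$ on $n$ wires, $\varphi(A)(\vec v)>_{{\tt M}^n}\varphi(B)(\vec v)$ for all $\vec v\in{\tt M}^n$. For instance, for the second permutation rule $\varphi(A)(v,w,z)=(z{\tt l}{\tt l},w{\tt l}{\tt r},v{\tt r}{\tt r})$ and $\varphi(B)(v,w,z)=(z{\tt l}{\tt l},w{\tt r}{\tt l},v{\tt r}{\tt r})$.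
   Context: $\mathbf{Toff}$ is the free strict $3$-category generated by: one $0$-cell $\ast$; one $1$-generator, the wire $1:\ast\to\ast$; four $2$-generators $s:2\Rightarrow2$ (SWAP), $N:1\Rightarrow1$ (NOT), $T_2:2\Rightarrow2$, $T_3:3\Rightarrow3$; and the set $R_3$ of $3$-generators listed below. Write $\star_0$ for parallel composition (left to right), $\star_1$ for sequential composition (diagrammatic order, first the left operand then the right one), $1$ also for the identity $2$-cell on one wire and $\mathrm{id}_n$ for the identity $2$-cell on $n$ wires. Let $L_3=(s\star_01)\star_1(1\star_0s)$, $L_4=(s\star_01\star_01)\star_1(1\star_0s\star_01)\star_1(1\star_01\star_0s)$, $L'_3=(1\star_0s)\star_1(s\star_01)$, $L'_4=(1\star_01\star_0s)\star_1(1\star_0s\star_01)\star_1(s\star_01\star_01)$. $R_3$ consists of: $s\star_1s\Rrightarrow\mathrm{id}_2$; $(s\star_01)\star_1(1\star_0s)\star_1(s\star_01)\Rrightarrow(1\star_0s)\star_1(s\star_01)\star_1(1\star_0s)$; $N\star_1N\Rrightarrow\mathrm{id}_1$; $T_2\star_1T_2\Rrightarrow\mathrm{id}_2$; $T_3\star_1T_3\Rrightarrow\mathrm{id}_3$; $s\star_1(N\star_01)\Rrightarrow(1\star_0N)\star_1s$; $s\star_1(1\star_0N)\Rrightarrow(N\star_01)\star_1s$; $L_3\star_1(T_2\star_01)\Rrightarrow(1\star_0T_2)\star_1L_3$; $L'_3\star_1(1\star_0T_2)\Rrightarrow(T_2\star_01)\star_1L'_3$; $L_4\star_1(T_3\star_01)\Rrightarrow(1\star_0T_3)\star_1L_4$;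 $L'_4\star_1(1\star_0T_3)\Rrightarrow(T_3\star_01)\star_1L'_4$; $(s\star_01)\star_1T_3\Rrightarrow T_3\star_1(s\star_01)$. ${\tt M}$ is the free monoid of words on ${\tt l},{\tt r},{\tt t}$ (written left to right, $v{\tt t}$ appends ${\tt t}$), ordered by $<_{\tt M}$: first by length, then lexicographically with ${\tt t}<{\tt r}<{\tt l}$; on ${\tt M}^n$, $\vec x<_{{\tt M}^n}\vec y$ iff $x_i\le_{\tt M}y_i$ for all $i$ and $\vec x\ne\vec y$. *)

From HB Require Import structures.
From mathcomp Require Import all_boot.
From Stdlib Require List.
Set Implicit Arguments. Unset Strict Implicit. Unset Printing Implicit Defensive.

Inductive letter := Ll | Lr | Lt.

Definition letter_eqb (a b : letter) : bool :=
  match a, b with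
  | Ll, Ll | Lr, Lr | Lt, Lt => true
  | _, _ => false
  end.

Lemma letter_eqP : Equality.axiom letter_eqb.
Proof. by case; case; constructor. Qed.

HB.instance Definition _ := hasDecEq.Build letter letter_eqP.

(* words, written left to right; [v t] = rcons v Lt *)
Definition word := seq letter.

Definition rank (a : letter) : nat :=
  match a with Lt => 0 | Lr => 1 | Ll => 2 end.

Fixpoint lexlt (u w : word) : bool :=
  match u, w with
  | a :: u', b :: w' => (rank a < rank b) || ((a == b) && lexlt u' w')
  | _, _ => false
  end.

Definition ltM (u w : word) : bool :=
  (size u < size w) || ((size u == size w) && lexlt u w).
Definition leM (u w : word) : bool := (u == w) || ltM u w.

Definition ltMn (x y : seq word) : bool :=
  all2 leM x y && (x != y).

Inductive cell :=
  | Idc of nat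
  | Swap
  | Not
  | Tof2
  | Tof3
  | Par of cell & cell
  | Seq of cell & cell.   (* a *1 b : first a then b *)

Fixpoint arity (c : cell) : nat :=
  match c with
  | Idc n => n
  | Swap => 2 | Not => 1 | Tof2 => 2 | Tof3 => 3
  | Par a b => arity a + arity b
  | Seq a _ => arity a
  end.

Fixpoint phi (c : cell) (v : seq word) : seq word :=
  match c with
  | Idc _ => v
  | Swap => match v with [:: x; y] => [:: rcons y Ll; rcons x Lr] | _ => v end
  | Not => match v with [:: x] => [:: rcons x Lt] | _ => v end
  | Tof2 => match v with [:: x; y] => [:: rcons x Lt; rcons y Lt] | _ => v end
  | Tof3 => match v with [:: x; y; z] => [:: rcons x Lt; rcons y Lt; rcons z Lt]
            | _ => v end
  | Par a b => phi a (take (arity a) v) ++ phi b (drop (arity a) v)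
  | Seq a b => phi b (phi a v)
  end.

Notation "a *0 b" := (Par a b) (at level 40, left associativity).
Notation "a *1 b" := (Seq a b) (at level 50, left associativity).

Definition w1 := Idc 1.
Definition L3 := (Swap *0 w1) *1 (w1 *0 Swap).
Definition L4 := (Swap *0 w1 *0 w1) *1 (w1 *0 Swap *0 w1) *1 (w1 *0 w1 *0 Swap).
Definition L3' := (w1 *0 Swap) *1 (Swap *0 w1).
Definition L4' := (w1 *0 w1 *0 Swap) *1 (w1 *0 Swap *0 w1) *1 (Swap *0 w1 *0 w1).

(* R_3 : list of (n, source A, target B) *)
Definition R3 : seq (nat * cell * cell) :=
  [:: (2, Swap *1 Swap, Idc 2);
      (3, (Swap *0 w1) *1 (w1 *0 Swap) *1 (Swap *0 w1),
          (w1 *0 Swap) *1 (Swap *0 w1) *1 (w1 *0 Swap));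
      (1, Not *1 Not, Idc 1);
      (2, Tof2 *1 Tof2, Idc 2);
      (3, Tof3 *1 Tof3, Idc 3);
      (2, Swap *1 (Not *0 w1), (w1 *0 Not) *1 Swap);
      (2, Swap *1 (w1 *0 Not), (Not *0 w1) *1 Swap);
      (3, L3 *1 (Tof2 *0 w1), (w1 *0 Tof2) *1 L3);
      (3, L3' *1 (w1 *0 Tof2), (Tof2 *0 w1) *1 L3');
      (4, L4 *1 (Tof3 *0 w1), (w1 *0 Tof3) *1 L4);
      (4, L4' *1 (w1 *0 Tof3), (Tof3 *0 w1) *1 L4');
      (3, (Swap *0 w1) *1 Tof3, Tof3 *1 (Swap *0 w1))].

From mathcomp Require Import all_boot.

(* Every rule of R_3 either lengthens some word on its source side (the
   involution rules), or appends, to one or more common prefixes, the same two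
   letters in a lexicographically larger order (the commutation rules), while
   leaving all other components equal.  In both cases the source image
   dominates the target image componentwise and differs from it. *)

Lemma lexlt_irr (u : word) : lexlt u u = false.
Proof. by elim: u => //= a u ->; rewrite ltnn eqxx. Qed.

Lemma lexlt_cat2l (p u w : word) : lexlt (p ++ u) (p ++ w) = lexlt u w.
Proof. by elim: p => //= a p ->; rewrite ltnn eqxx. Qed.

Lemma ltM_irr (u : word) : ltM u u = false.
Proof. by rewrite /ltM ltnn lexlt_irr eqxx. Qed.

Lemma leM_refl (u : word) : leM u u.
Proof. by rewrite /leM eqxx. Qed.

Lemma ltMW (u w : word) : ltM u w -> leM u w.
Proof. by rewrite /leM => ->; rewrite orbT. Qed.

Lemma ltM_size (u w : word) : size u < size w -> ltM u w.
Proof. by rewrite /ltM => ->. Qed.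

Lemma ltM_rcons2 (w : word) (a b c d : letter) : lexlt [:: a; b] [:: c; d] ->
  ltM (rcons (rcons w a) b) (rcons (rcons w c) d).
Proof.
by rewrite /ltM !size_rcons ltnn eqxx -!cats1 -!catA lexlt_cat2l.
Qed.

Lemma all2_leM_refl (x : seq word) : all2 leM x x.
Proof. by elim: x => //= a x ->; rewrite leM_refl. Qed.

Lemma all2_leM_cons (a b : word) (x y : seq word) :
  leM a b -> all2 leM x y -> all2 leM (a :: x) (b :: y).
Proof. by move=> /= -> ->. Qed.

Lemma ltMn_cons_lt (a b : word) (x y : seq word) :
  ltM a b -> all2 leM x y -> ltMn (a :: x) (b :: y).
Proof.
move=> ltab lexy; rewrite /ltMn /= ltMW // lexy /=.
by apply: contraTneq ltab => -[-> _]; rewrite ltM_irr.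
Qed.

Lemma ltMn_cons_eq (a : word) (x y : seq word) :
  ltMn x y -> ltMn (a :: x) (a :: y).
Proof.
by case/andP => lexy neqxy; rewrite /ltMn /= leM_refl lexy; apply: contra neqxy => /eqP[->].
Qed.

Ltac ltM_by := first [ apply: ltM_rcons2; reflexivity
                     | apply: ltM_size; rewrite ?size_rcons; by [] ].

Ltac ltMn_by :=
  repeat first
    [ apply: ltMn_cons_eq
    | apply: ltMn_cons_lt; [ltM_by |]
    | exact: all2_leM_refl
    | apply: all2_leM_cons; [first [exact: leM_refl | apply: ltMW; ltM_by] |] ].

Theorem mainTheorem6 :
  forall (n : nat) (A B : cell), List.In (n, A, B) R3 ->
  forall v : seq word, size v = n -> ltMn (phi B v) (phi A v).
Proof.
move=> n A B; rewrite /R3 /=.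
repeat case=> [[<- <- <-]|]; try by [];
  case=> [|x [|y [|z [|w [|? ?]]]]] //= _; ltMn_by.
Qed.
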